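(* Let $S$ be a numerical semigroup with multiplicity $m(S) = 3$, and let its Apéry set with respect to $3$ be $\{0,a_1,a_2\}$, where for $i=1,2$, $a_i$ is the smallest element of $S$ with $a_i \equiv i \pmod{3}$. (a) If $|a_1-a_2|\leq 2$, then $\dim_{\mathrm{mat}} S=2$. (b) If $|a_1-a_2| > 2$, then $\dim_{\mathrm{mat}} S=3$.
   Context: $\mathbb{N} = \{0,1,2,\ldots\}$. A numerical semigroup is an additive subsemigroup of $\mathbb{N}$ containing $0$ with finite complement in $\mathbb{N}$; its multiplicity $m(S)$ is its smallest nonzero element. $\mathsf{M}_d(X)$ denotes the $d\times d$ matrices with entries in $X$. For $A \in \mathsf{M}_d(\mathbb{Q})$, $\mathcal{S}(A) = \{ n \in \mathbb{N} : A^n \in \mathsf{M}_d(\mathbb{Z})\}$. The matricial dimension $\dim_{\mathrm{mat}} S$ is the smallest $d$ such that $S = \mathcal{S}(A)$ for some $A \in \mathsf{M}_d(\mathbb{Q})$. *)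

From mathcomp Require Import all_boot all_order all_algebra.
Set Implicit Arguments. Unset Strict Implicit. Unset Printing Implicit Defensive.
Import Order.TTheory GRing.Theory Num.Theory.

Definition numerical_semigroup (S : nat -> Prop) : Prop :=
  [/\ S 0%N,
      (forall x y, S x -> S y -> S (x + y)%N) &
      exists N : nat, forall n, (N <= n)%N -> S n].

Definition multiplicity (S : nat -> Prop) (m : nat) : Prop :=
  [/\ (0 < m)%N, S m & forall k, (0 < k)%N -> (k < m)%N -> ~ S k].

Definition apery_elt (S : nat -> Prop) (m i a : nat) : Prop :=
  [/\ S a, a = i %[mod m] & forall b, S b -> b = i %[mod m] -> (a <= b)%N].

Definition int_mx (d : nat) (A : 'M[rat]_d) : Prop :=
  forall i j, A i j \is a Num.int.

Definition SA (d : nat) (A : 'M[rat]_d) (n : nat) : Prop := int_mx (A ^+ n).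

Definition realizable_in_dim (S : nat -> Prop) (d : nat) : Prop :=
  exists A : 'M[rat]_d, forall n, S n <-> SA A n.

Definition dim_mat_eq (S : nat -> Prop) (d : nat) : Prop :=
  realizable_in_dim S d /\ forall d', (d' < d)%N -> ~ realizable_in_dim S d'.

From mathcomp Require Import all_boot all_order all_algebra.
From mathcomp Require Import zify ring.
Set Implicit Arguments. Unset Strict Implicit. Unset Printing Implicit Defensive.
Import Order.TTheory GRing.Theory Num.Theory.

(* A numerical semigroup S of multiplicity 3 is determined by its Apery
   elements: n is in S iff n >= a_(n mod 3).

   A weighted cyclic permutation matrix of size 3 whose weights
   are the powers 2^(a2+1), 2^(a1+1-a2), 2^(1-a1) satisfies A^3 = 8, and
   A^n = 8^(n/3) A^(n mod 3) is integral exactly when n lies in S.  When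
   |a1 - a2| <= 2, S = {n | 3 divides n or n >= min(a1, a2)}, which is
   realized by a 2x2 matrix of trace -2 and determinant 4.

   In dimension <= 1 an integral cube forces an integral
   matrix (rational roots of monic integer polynomials are integers), so
   1 would lie in S.  For a 2x2 rational matrix A with A^3 integral, the
   trace t and determinant d are integers, and Cayley-Hamilton gives
   A^(n+3) = -t^3 A^n modulo integral matrices; hence for 3 not dividing n,
   A^n is integral iff t^(n-1) A is.  So S(A) is closed under going up
   within the classes 1 and 2 mod 3, which forces a2 <= a1 + 1 and
   a1 <= a2 + 2. *)

Definition mult3_semigroup (a1 a2 n : nat) : Prop :=
  (n %% 3 = 1 -> a1 <= n) /\ (n %% 3 = 2 -> a2 <= n).

Lemma apery_elt_le_addn (S : nat -> Prop) (m i j k ai aj ak : nat) :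
  (forall x y, S x -> S y -> S (x + y)) ->
  apery_elt S m i ai -> apery_elt S m j aj -> apery_elt S m k ak ->
  k = i + j %[mod m] -> ak <= ai + aj.
Proof.
move=> Sadd [Sai ai_mod _] [Saj aj_mod _] [_ _ ak_min] k_mod.
by apply: ak_min; [exact: Sadd | rewrite -modnDm ai_mod aj_mod modnDm].
Qed.

Lemma numerical_semigroup_mult3 (S : nat -> Prop) (a1 a2 : nat) :
  numerical_semigroup S -> multiplicity S 3 ->
  apery_elt S 3 1 a1 -> apery_elt S 3 2 a2 ->
  forall n, S n <-> mult3_semigroup a1 a2 n.
Proof.
move=> [S0 Sadd _] [_ S3 _] [Sa1 a1_mod a1_min] [Sa2 a2_mod a2_min] n.
split=> [Sn | [n1 n2]]; first by split=> n_mod; [apply: a1_min | apply: a2_min].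
have S_add3 a q : S a -> S (a + 3 * q).
  by move=> Sa; elim: q => [|q IHq]; rewrite ?muln0 ?addn0 // mulnS addnCA; apply: Sadd.
have := ltn_mod n 3; case n_mod: (n %% 3) => [|[|[|//]]] _.
- have -> : n = 0 + 3 * (n %/ 3) by lia.
  exact: S_add3.
- have -> : n = a1 + 3 * ((n - a1) %/ 3) by move: a1_mod (n1 n_mod); lia.
  exact: S_add3.
- have -> : n = a2 + 3 * ((n - a2) %/ 3) by move: a2_mod (n2 n_mod); lia.
  exact: S_add3.
Qed.

Lemma eq_realizable_in_dim (S S' : nat -> Prop) (d : nat) :
  (forall n, S n <-> S' n) -> realizable_in_dim S' d -> realizable_in_dim S d.
Proof. by move=> SS' [A HA]; exists A => n; rewrite SS'. Qed.

Local Open Scope ring_scope.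

Lemma rat_root_monic_int (p : {poly int}) (x : rat) :
  p \is monic -> root (map_poly intr p) x -> x \is a Num.int.
Proof.
move=> p_monic /rootP; rewrite Qint_def horner_coef (size_map_inj_poly (@intr_inj rat)) //.
have /polySpred -> := monic_neq0 p_monic; set k := (size p).-1.
have lead1 : p`_k = 1 by have /monicP := p_monic; rewrite lead_coefE.
rewrite big_ord_recr /= !coef_map /= lead1 mul1r.
have := coprime_num_den x; have := denq_gt0 x; have := numqE x.
move: (numq x) (denq x) => n m xE m_gt0 nm_coprime px0.
pose r := \sum_(i < k) p`_i * n ^+ i * m ^+ (k - i.+1).
have nk : n ^+ k = - (m * r).
  apply/eqP; rewrite -addr_eq0; apply/eqP/(@intr_inj rat).
  rewrite rmorph0 -(mulr0 ((m%:~R : rat) ^+ k)) -px0 rmorphD rmorphM rmorphXn rmorph_sum /=.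
  rewrite xE mulrDr addrC mulr_sumr big_distrr /= exprMn mulrC; congr (_ + _).
  apply: eq_bigr => i _; rewrite coef_map /= !rmorphM !rmorphXn /= xE.
  rewrite -[in m%:~R ^+ k](subnKC (ltn_ord i)) exprD exprS exprMn.
  set P := (p`_i)%:~R; set M := (m%:~R : rat); ring.
have : (m %| n ^+ k)%Z by apply/dvdzP; exists (- r); rewrite nk mulNr mulrC.
rewrite -[n ^+ k]mulr1 Gauss_dvdzr ?dvdz1; last first.
  by rewrite coprimez_sym coprimezXl // coprimezE.
by move: m_gt0; lia.
Qed.

Lemma rat_cubic_int (x a b : rat) : a \is a Num.int -> b \is a Num.int ->
  x ^+ 3 = a * x + b -> x \is a Num.int.
Proof.
move=> /numqK a_eq /numqK b_eq x_eq.
apply: (@rat_root_monic_int ('X^3 - ((numq a)%:P * 'X + (numq b)%:P))).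
  rewrite monicE lead_coefDl ?lead_coefXn // size_polyXn size_opp.
  rewrite (leq_ltn_trans (size_polyD _ _)) // gtn_max mul_polyC size_polyC.
  by rewrite (leq_ltn_trans (size_scale_leq _ _)) ?size_polyX //; case: (_ != 0).
rewrite rootE !(rmorphB, rmorphD, rmorphM) /=.
rewrite !map_polyC map_polyX !hornerE.
by apply/eqP; rewrite /= a_eq b_eq -x_eq; ring.
Qed.

Section IntegralMatrices.
Variable n : nat.
Implicit Types (A B : 'M[rat]_n) (k : rat).

Lemma int_mxD A B : int_mx A -> int_mx B -> int_mx (A + B).
Proof. by move=> hA hB i j; rewrite mxE rpredD. Qed.

Lemma int_mx0 : int_mx (0 : 'M_n).
Proof. by move=> i j; rewrite mxE rpred0. Qed.

Lemma int_mxZ k A : k \is a Num.int -> int_mx A -> int_mx (k *: A).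
Proof. by move=> hk hA i j; rewrite mxE rpredM. Qed.

Lemma int_mxN A : int_mx A -> int_mx (- A).
Proof. by move=> hA; rewrite -scaleN1r; apply: int_mxZ; rewrite ?rpredN1. Qed.

Lemma int_mxB A B : int_mx A -> int_mx B -> int_mx (A - B).
Proof. by move=> hA hB; apply: int_mxD (int_mxN _). Qed.

Lemma int_mx_scalar k : k \is a Num.int -> int_mx (k%:M : 'M_n).
Proof. by move=> hk i j; rewrite mxE rpredMn. Qed.

Lemma int_mxZsign (m : nat) A : int_mx ((-1) ^+ m *: A) <-> int_mx A.
Proof. by split=> hA i j; have := hA i j; rewrite mxE rpredMsign. Qed.

Lemma int_mx_eqmod A B : int_mx (A - B) -> int_mx A <-> int_mx B.
Proof.
move=> hAB; split=> [hA | hB]; last by rewrite -[A](subrK B); apply: int_mxD.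
by rewrite -[B](subKr A); apply: int_mxB.
Qed.

Lemma int_mx_tr A : int_mx A -> \tr A \is a Num.int.
Proof. by move=> hA; rewrite rpred_sum. Qed.

Lemma int_mx_det A : int_mx A -> \det A \is a Num.int.
Proof.
move=> hA; rewrite rpred_sum // => s _.
by rewrite rpredM ?rpredX ?rpredN ?rpred1 // rpred_prod.
Qed.

End IntegralMatrices.

Lemma SA_cube_scalar n (A : 'M[rat]_n.+1) c m :
  A ^+ 3 = c%:M -> SA A m <-> int_mx (c ^+ (m %/ 3) *: A ^+ (m %% 3)).
Proof.
move=> A3; rewrite /SA {1}(divn_eq m 3) exprD mulnC exprM A3 -rmorphXn /=.
by rewrite -mulmxE mul_scalar_mx.
Qed.

Section TwoByTwo.
Variable R : comNzRingType.
Implicit Type A : 'M[R]_2.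

Lemma mx2_sqr A : A ^+ 2 = \tr A *: A - (\det A)%:M.
Proof.
have := Cayley_Hamilton A.
rewrite -[char_poly A]coefK poly_def size_char_poly rmorph_sum !big_ord_recr big_ord0 /=.
rewrite char_poly_det (char_poly_trace A isT).
have -> : (char_poly A)`_2 = 1.
  by have /monicP := char_poly_monic A; rewrite lead_coefE size_char_poly.
rewrite !horner_mxZ !rmorphXn /= horner_mx_X add0r expr0 expr1 sqrrN expr1n mul1r scale1r.
by move/eqP; rewrite addrC addr_eq0 opprD scaleNr opprK addrC scalemx1 => /eqP.
Qed.

Lemma mx2_exprSS A n : A ^+ n.+2 = \tr A *: A ^+ n.+1 - \det A *: A ^+ n.
Proof.
rewrite [LHS]exprSr [in LHS]exprSr -mulrA -expr2 mx2_sqr mulrBr -scalerAr -exprSr.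
by rewrite -mulmxE mul_mx_scalar.
Qed.

Lemma mx2_cube A : A ^+ 3 = (\tr A ^+ 2 - \det A) *: A - (\tr A * \det A)%:M.
Proof.
rewrite mx2_exprSS mx2_sqr expr1.
by rewrite scalerBr scalerA -expr2 scale_scalar_mx scalerBl addrAC.
Qed.

End TwoByTwo.

Section IntegralCube2.
Variable A : 'M[rat]_2.
Hypothesis A3_int : int_mx (A ^+ 3).
Local Notation t := (\tr A).
Local Notation d := (\det A).
Local Notation u := (t ^+ 2 - d).

Lemma mx2_tr_det_int : t \is a Num.int /\ d \is a Num.int.
Proof.
have d_int : d \is a Num.int.
  apply: (@rat_cubic_int _ 0 (\det (A ^+ 3))); rewrite ?rpred0 ?int_mx_det //.
  by rewrite mul0r add0r !exprS expr0 !mulr1 -!mulmxE !det_mulmx.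
split=> //; apply: (@rat_cubic_int _ (3 * d) (\tr (A ^+ 3))).
- by rewrite rpredM // rpred_nat.
- exact: int_mx_tr.
by rewrite mx2_cube linearB /= mxtraceZ mxtrace_scalar; ring.
Qed.

Let t_int : t \is a Num.int. Proof. by case: mx2_tr_det_int. Qed.
Let d_int : d \is a Num.int. Proof. by case: mx2_tr_det_int. Qed.
Let u_int : u \is a Num.int. Proof. by rewrite rpredB ?rpredX. Qed.

Lemma int_mx_scale_expr n : int_mx (u *: A ^+ n).
Proof.
have uA_int : int_mx (u *: A).
  rewrite -[_ *: A](subrK (t * d)%:M) -mx2_cube.
  by apply: int_mxD => //; apply: int_mx_scalar; rewrite rpredM.
suff [] : int_mx (u *: A ^+ n) /\ int_mx (u *: A ^+ n.+1) by [].
elim: n => [|n [IHn IHn1]]; first by rewrite expr0 expr1 scalemx1; split=> //; apply: int_mx_scalar.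
split=> //; rewrite mx2_exprSS scalerBr !scalerA ![u * _]mulrC -!scalerA.
by apply: int_mxB; apply: int_mxZ.
Qed.

Lemma int_mx_expr_add3 n : int_mx (A ^+ (n + 3) + t ^+ 3 *: A ^+ n).
Proof.
have -> : A ^+ (n + 3) + t ^+ 3 *: A ^+ n = u *: A ^+ n.+1 + t *: (u *: A ^+ n).
  rewrite exprD mx2_cube mulrBr -scalerAr -exprSr -mulmxE mul_mx_scalar.
  by rewrite -addrA -scaleNr -scalerDl scalerA; congr (_ + _ *: _); ring.
apply: int_mxD; first exact: int_mx_scale_expr.
by apply: int_mxZ => //; apply: int_mx_scale_expr.
Qed.

Lemma int_mx_expr_mod3 j m : int_mx (A ^+ (3 * j + m) - (- t ^+ 3) ^+ j *: A ^+ m).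
Proof.
elim: j => [|j IHj]; first by rewrite muln0 add0n expr0 scale1r subrr; apply: int_mx0.
have -> : A ^+ (3 * j.+1 + m) - (- t ^+ 3) ^+ j.+1 *: A ^+ m =
    (A ^+ (3 * j + m + 3) + t ^+ 3 *: A ^+ (3 * j + m))
    - t ^+ 3 *: (A ^+ (3 * j + m) - (- t ^+ 3) ^+ j *: A ^+ m).
  rewrite -addnA (addnC m) addnA -mulnSr scalerBr scalerA.
  by rewrite exprS mulNr scaleNr opprK opprB addrA addrAC addrK.
apply: int_mxB; first exact: int_mx_expr_add3.
exact: int_mxZ (rpredX _ t_int) IHj.
Qed.

Lemma int_mx_expr_tr n : ~~ (3 %| n)%N -> int_mx (A ^+ n) <-> int_mx (t ^+ n.-1 *: A).
Proof.
move=> n3; have [j [r [r_lt2 ->]]] : exists j r, (r < 2)%N /\ n = (3 * j + r.+1)%N.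
  by exists (n %/ 3)%N, (n %% 3).-1; lia.
have A_r : int_mx (A ^+ r.+1 - t ^+ r *: A).
  case: r r_lt2 => [|[|//]] _; first by rewrite expr1 expr0 scale1r subrr; apply: int_mx0.
  by rewrite mx2_sqr expr1 addrAC subrr add0r; apply/int_mxN/int_mx_scalar.
rewrite -(int_mxZsign j (t ^+ _ *: A)) addnS /=; apply: int_mx_eqmod.
have -> : (-1) ^+ j *: (t ^+ (3 * j + r) *: A) = (- t ^+ 3) ^+ j *: (t ^+ r *: A).
  by rewrite !scalerA (exprNn (t ^+ 3)) -exprM -mulrA -exprD.
rewrite -addnS -[_ - _](@subrKA _ ((- t ^+ 3) ^+ j *: A ^+ r.+1)) -scalerBr.
apply: int_mxD; first exact: int_mx_expr_mod3.
by apply: int_mxZ => //; rewrite rpredX ?rpredN ?rpredX.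
Qed.

Lemma int_mx_expr_addn n k : ~~ (3 %| n)%N -> ~~ (3 %| n + k)%N ->
  int_mx (A ^+ n) -> int_mx (A ^+ (n + k)).
Proof.
move=> n3 nk3; rewrite (int_mx_expr_tr n3) (int_mx_expr_tr nk3) => h.
have -> : (n + k).-1 = (k + n.-1)%N by lia.
by rewrite exprD -scalerA; apply: int_mxZ; rewrite ?rpredX.
Qed.

End IntegralCube2.

Lemma realizable_lt2_full (S : nat -> Prop) (d n m : nat) :
  (d < 2)%N -> realizable_in_dim S d -> S n.+1 -> S m.
Proof.
case: d => [|[|//]] _ [A HA] /HA An; apply/HA; first by case.
have mxX k : A ^+ k = (A 0 0 ^+ k)%:M by rewrite {1}[A]mx11_scalar -rmorphXn.
have /numqK a_eq : A 0 0 ^+ n.+1 \is a Num.int by have := An 0 0; rewrite mxX mxE.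
have a_int : A 0 0 \is a Num.int.
  apply: (@rat_root_monic_int ('X^(n.+1) - (numq (A 0 0 ^+ n.+1))%:P)); first exact: monicXnsubC.
  by rewrite rootE rmorphB /= map_polyXn map_polyC /= !hornerE a_eq subrr.
by move=> i j; rewrite mxX mxE rpredMn ?rpredX.
Qed.

Lemma realizable2_addn (S : nat -> Prop) (n k : nat) :
  realizable_in_dim S 2 -> S 3%N -> ~~ (3 %| n)%N -> ~~ (3 %| n + k)%N -> S n -> S (n + k)%N.
Proof. by move=> [A HA] /HA A3 n3 nk3 /HA An; apply/HA; apply: int_mx_expr_addn. Qed.

Lemma pow2z_int (z : int) : ((2 : rat) ^ z \is a Num.int) = (0 <= z).
Proof.
case: z => n; first by rewrite rpredX ?rpred_nat.
rewrite NegzE -exprnN Qint_def.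
have -> : (2 : rat) ^+ n.+1 = (2 ^+ n.+1 : int)%:~R by rewrite rmorphXn.
by rewrite denqVz ?expf_neq0 // normrX pexprn_eq1 // oppr_ge0.
Qed.

Lemma pow2_pow2z_int (k : nat) (z : int) : ((2 : rat) ^+ k * 2 ^ z \is a Num.int) = (0 <= k%:Z + z).
Proof. by rewrite -pow2z_int expfzDr. Qed.

Definition mx22 {R : Type} (a b c d : R) : 'M[R]_2 :=
  \matrix_(i, j) if i == 0 then (if j == 0 then a else b) else (if j == 0 then c else d).

Section Mx22.
Variable R : comNzRingType.
Implicit Types a b c d k : R.

Lemma mxtrace_mx22 a b c d : \tr (mx22 a b c d) = a + d.
Proof. by rewrite /mxtrace !big_ord_recr big_ord0 /= !mxE /= add0r. Qed.

Lemma det_mx22 a b c d : \det (mx22 a b c d) = a * d - b * c.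
Proof.
rewrite (expand_det_row _ 0) !big_ord_recr big_ord0 /= /cofactor !det_mx11 !mxE /=.
by rewrite add0r expr0 mul1r expr1 mulN1r mulrN.
Qed.

Lemma scale_mx22 k a b c d : k *: mx22 a b c d = mx22 (k * a) (k * b) (k * c) (k * d).
Proof. by apply/matrixP => i j; rewrite !mxE; case: (i == 0); case: (j == 0). Qed.

End Mx22.

Lemma int_mx22 (a b c d : rat) : int_mx (mx22 a b c d) <->
  [&& a \is a Num.int, b \is a Num.int, c \is a Num.int & d \is a Num.int].
Proof.
split=> [H | /and4P[ha hb hc hd] i j].
  by move: (H 0 0) (H 0 1) (H 1 0) (H 1 1); rewrite !mxE /= => -> -> -> ->.
by rewrite mxE; case: i => [[|[|//]] ?]; case: j => [[|[|//]] ?].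
Qed.

Lemma realizable2_tail (c : nat) : realizable_in_dim (fun n => n %% 3 = 0 \/ c <= n)%N 2.
Proof.
pose A : 'M[rat]_2 := mx22 0 (- 2 ^ (1 - c%:Z)) (2 ^ (c%:Z + 1)) (-2).
have trA : \tr A = -2 by rewrite mxtrace_mx22 add0r.
have detA : \det A = 4.
  rewrite det_mx22 mul0r sub0r mulNr opprK -expfzDr //.
  by rewrite (_ : _ + _ = 2%:Z) //; ring.
have A3 : A ^+ 3 = 8%:M.
  rewrite mx2_cube trA detA (_ : (-2) ^+ 2 - 4 = 0); last by ring.
  by rewrite scale0r sub0r -raddfN /=; congr _%:M; ring.
have A3_int : int_mx (A ^+ 3) by rewrite A3; apply: int_mx_scalar; rewrite rpred_nat.
exists A => n; have [n3 | n3] := boolP (3 %| n)%N.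
  split=> _; last by left; apply/eqP.
  rewrite (SA_cube_scalar _ A3) (eqP n3) expr0 scalemx1.
  by apply: int_mx_scalar; rewrite rpredX ?rpred_nat.
rewrite /SA (int_mx_expr_tr A3_int n3) trA scale_mx22 int_mx22.
rewrite mulr0 rpred0 !mulrN !rpredN exprNn -!mulrA !rpredMsign !pow2_pow2z_int.
by rewrite rpredM ?rpredX ?rpred_nat //= andbT; split; lia.
Qed.

Definition mx33 {R : Type} (a b c d e f g h k : R) : 'M[R]_3 :=
  \matrix_(i, j)
    if i == 0 then (if j == 0 then a else if j == 1 then b else c)
    else if i == 1 then (if j == 0 then d else if j == 1 then e else f)
    else (if j == 0 then g else if j == 1 then h else k).

Section Mx33.
Variable R : comNzRingType.
Implicit Types a b c d e f g h k s : R.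

Lemma mul_mx33 a b c d e f g h k a' b' c' d' e' f' g' h' k' :
  mx33 a b c d e f g h k * mx33 a' b' c' d' e' f' g' h' k' =
  mx33 (a * a' + b * d' + c * g') (a * b' + b * e' + c * h') (a * c' + b * f' + c * k')
      (d * a' + e * d' + f * g') (d * b' + e * e' + f * h') (d * c' + e * f' + f * k')
      (g * a' + h * d' + k * g') (g * b' + h * e' + k * h') (g * c' + h * f' + k * k').
Proof.
apply/matrixP => i j; rewrite !mxE !big_ord_recr big_ord0 /= !mxE /= add0r.
by case: i => [[|[|[|//]]] ?]; case: j => [[|[|[|//]]] ?].
Qed.

Lemma scale_mx33 s a b c d e f g h k :
  s *: mx33 a b c d e f g h k =
  mx33 (s * a) (s * b) (s * c) (s * d) (s * e) (s * f) (s * g) (s * h) (s * k).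
Proof.
apply/matrixP => i j; rewrite !mxE.
by case: i => [[|[|[|//]]] ?]; case: j => [[|[|[|//]]] ?].
Qed.

Lemma scalar_mx33 s : s%:M = mx33 s 0 0 0 s 0 0 0 s.
Proof.
apply/matrixP => i j; rewrite !mxE.
by case: i => [[|[|[|//]]] ?]; case: j => [[|[|[|//]]] ?].
Qed.

End Mx33.

Lemma int_mx33 (a b c d e f g h k : rat) : int_mx (mx33 a b c d e f g h k) <->
  [&& a \is a Num.int, b \is a Num.int, c \is a Num.int, d \is a Num.int, e \is a Num.int,
      f \is a Num.int, g \is a Num.int, h \is a Num.int & k \is a Num.int].
Proof.
split=> [H | /and3P[ha hb /and3P[hc hd /and3P[he hf /and3P[hg hh hk]]]] i j].
  move: (H 0 0) (H 0 1) (H 0 2) (H 1 0) (H 1 1) (H 1 2) (H 2 0) (H 2 1) (H 2 2).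
  by rewrite !mxE /= => -> -> -> -> -> -> -> -> ->.
by rewrite mxE; case: i => [[|[|[|//]]] ?]; case: j => [[|[|[|//]]] ?].
Qed.

Lemma realizable3_mult3 (a1 a2 : nat) :
  (a2 <= a1.*2)%N -> (a1 <= a2.*2)%N -> realizable_in_dim (mult3_semigroup a1 a2) 3.
Proof.
move=> a21 a12.
pose A : 'M[rat]_3 :=
  mx33 0 0 (2 ^ (1 - a1%:Z)) (2 ^ (a2%:Z + 1)) 0 0 0 (2 ^ (a1%:Z + 1 - a2%:Z)) 0.
have A2 : A ^+ 2 =
    mx33 0 (2 ^ (2 - a2%:Z)) 0 0 0 (2 ^ (a2%:Z + 2 - a1%:Z)) (2 ^ (a1%:Z + 2)) 0 0.
  rewrite expr2 mul_mx33 !(mul0r, mulr0, add0r, addr0) -!expfzDr //.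
  by congr mx33; congr (_ ^ _); ring.
have A3 : A ^+ 3 = 8%:M.
  rewrite exprS A2 mul_mx33 scalar_mx33 !(mul0r, mulr0, add0r, addr0) -!expfzDr //.
  by congr mx33; rewrite (_ : 8 = 2 ^ 3%:Z) //; congr (_ ^ _); ring.
exists A => n; rewrite (SA_cube_scalar _ A3).
have -> : (8 : rat) ^+ (n %/ 3) = 2 ^+ (3 * (n %/ 3)) by rewrite exprM.
have := ltn_mod n 3; rewrite /mult3_semigroup.
case: (n %% 3)%N (divn_eq n 3) => [|[|[|//]]] n_eq _.
- rewrite expr0 scalemx1; split=> _ //.
  by apply: int_mx_scalar; rewrite rpredX ?rpred_nat.
- rewrite expr1 scale_mx33 int_mx33 !mulr0 rpred0 !pow2_pow2z_int /=; split; lia.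
- rewrite A2 scale_mx33 int_mx33 !mulr0 rpred0 !pow2_pow2z_int /=; split; lia.
Qed.

Local Close Scope ring_scope.

Theorem theorem3p4 (S : nat -> Prop) (a1 a2 : nat) :
  numerical_semigroup S -> multiplicity S 3 ->
  apery_elt S 3 1 a1 -> apery_elt S 3 2 a2 ->
  ((`|a1 - a2| <= 2)%N -> dim_mat_eq S 2) /\
  ((2 < `|a1 - a2|)%N -> dim_mat_eq S 3).
Proof.
move=> NS M3 A1 A2; have S_eq := numerical_semigroup_mult3 NS M3 A1 A2.
have [[_ Sadd _] [_ S3 S_gap]] := (NS, M3).
have [[Sa1 a1_mod _] [Sa2 a2_mod _]] := (A1, A2).
have not_lt2 d : d < 2 -> ~ realizable_in_dim S d.
  by move=> d_lt2 R; apply: (S_gap 1) => //; apply: realizable_lt2_full d_lt2 R S3.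
split=> a12_dist; split.
- apply: eq_realizable_in_dim (realizable2_tail (minn a1 a2)) => n.
  by rewrite S_eq /mult3_semigroup; move: a1_mod a2_mod a12_dist; lia.
- exact: not_lt2.
- apply: eq_realizable_in_dim (realizable3_mult3 _ _) => //; rewrite -addnn.
  + exact: (apery_elt_le_addn Sadd A1 A1 A2).
  + exact: (apery_elt_le_addn Sadd A2 A2 A1).
- move=> d; rewrite ltnS leq_eqVlt => /predU1P[-> R2 | ]; last exact: not_lt2.
  have /S_eq a1_up : S (a1 + 1) by apply: (realizable2_addn R2 S3 _ _ Sa1); move: a1_mod; lia.
  have /S_eq a2_up : S (a2 + 2) by apply: (realizable2_addn R2 S3 _ _ Sa2); move: a2_mod; lia.
  by move: a1_up a2_up a12_dist a1_mod a2_mod; rewrite /mult3_semigroup; lia.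
Qed.
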